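(* Let $R$ be a noetherian commutative ring with unit, let $L$ and $K$ be abelian monoids admitting cancellation, let $B=\bigoplus_{u\in L}B_u$ be an $L$-graded $R$-algebra and $A=\bigoplus_{w\in K}A_w$ a $K$-graded $R$-algebra without zero-divisors, and let $(\varphi,F)$ be a morphism from $B$ to $A$. Assume that the weight monoid $S(B)=\{u\in L;\ B_u\ne 0\}$ is finitely generated and that $\varphi$ restricts to an isomorphism $B_u\to A_{F(u)}$ for every $u\in L$. If $A$ is finitely generated over $R$, then $B$ is finitely generated over $R$.
   Context: For an abelian monoid $K$, a $K$-graded $R$-algebra is an associative commutative $R$-algebra with unit with a decomposition $A=\bigoplus_{w\in K}A_w$ into $R$-submodules with $A_wA_{w'}\subseteq A_{w+w'}$. A morphism from an $L$-graded algebra $B$ to a $K$-graded algebra $A$ is a pair $(\varphi,F)$ where $\varphi\colon B\to A$ is a homomorphism of $R$-algebras and $F\colon L\to K$ is a homomorphism of monoids with $\varphi(B_u)\subseteq A_{F(u)}$ for all $u\in L$. *)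

From mathcomp Require Import all_boot all_algebra.
Set Implicit Arguments. Unset Strict Implicit. Unset Printing Implicit Defensive.
Import GRing.Theory.
Local Open Scope ring_scope.

Definition is_ideal (R : comNzRingType) (I : R -> Prop) : Prop :=
  [/\ I 0, (forall x y, I x -> I y -> I (x + y)) & (forall r x, I x -> I (r * x))].

Definition in_ideal_span (R : comNzRingType) (s : seq R) (x : R) : Prop :=
  exists c : 'I_(size s) -> R, x = \sum_(i < size s) c i * s`_i.

Definition noetherian (R : comNzRingType) : Prop :=
  forall I : R -> Prop, is_ideal I ->
    exists s : seq R, forall x, I x <-> in_ideal_span s x.

Definition cancellative (L : nmodType) : Prop :=
  forall a b c : L, a + c = b + c -> a = b.

Definition is_submodule (R : comNzRingType) (A : comAlgType R) (M : A -> Prop)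
  : Prop :=
  [/\ M 0, (forall x y, M x -> M y -> M (x + y)) & (forall (r : R) x, M x -> M (r *: x))].

Definition is_grading (R : comNzRingType) (K : nmodType) (A : comAlgType R)
    (Ag : K -> A -> Prop) : Prop :=
  [/\ (forall w, is_submodule (Ag w)),
      (forall a : A, exists (s : seq K) (f : K -> A),
          uniq s /\ (forall w, Ag w (f w)) /\ a = \sum_(w <- s) f w),
      (forall (s : seq K) (f : K -> A), uniq s -> (forall w, Ag w (f w)) ->
          \sum_(w <- s) f w = 0 -> forall w, w \in s -> f w = 0)
    & (forall w w' x y, Ag w x -> Ag w' y -> Ag (w + w') (x * y))].

Definition graded_morphism (R : comNzRingType) (L K : nmodType)
    (B A : comAlgType R) (Bg : L -> B -> Prop) (Ag : K -> A -> Prop)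
    (phi : {lrmorphism B -> A}) (F : {additive L -> K}) : Prop :=
  forall u b, Bg u b -> Ag (F u) (phi b).

Definition no_zero_divisors (R : comNzRingType) (A : comAlgType R) : Prop :=
  forall x y : A, x * y = 0 -> x = 0 \/ y = 0.

Definition weight_monoid (R : comNzRingType) (L : nmodType) (B : comAlgType R)
    (Bg : L -> B -> Prop) (u : L) : Prop :=
  exists b : B, Bg u b /\ b <> 0.

Definition in_submonoid_gen (L : nmodType) (g : seq L) (u : L) : Prop :=
  exists c : 'I_(size g) -> nat, u = \sum_(i < size g) g`_i *+ c i.

Definition fg_monoid (L : nmodType) (S : L -> Prop) : Prop :=
  exists g : seq L, (forall x, x \in g -> S x) /\
    (forall u, S u <-> in_submonoid_gen g u).

Definition in_subalg_gen (R : comNzRingType) (A : comAlgType R) (s : seq A)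
    (a : A) : Prop :=
  forall P : A -> Prop,
    P 1 ->
    (forall x y, P x -> P y -> P (x + y)) ->
    (forall x y, P x -> P y -> P (x * y)) ->
    (forall (r : R) x, P x -> P (r *: x)) ->
    (forall x, x \in s -> P x) ->
    P a.

Definition fg_algebra (R : comNzRingType) (A : comAlgType R) : Prop :=
  exists s : seq A, forall a : A, in_subalg_gen s a.

(* Fix homogeneous generators f_1, ..., f_r of A, of degrees w_i, and
   generators g_1, ..., g_m of the weight monoid S(B).  Call (e, c) in N^(r+m)
   balanced when sum_i e_i w_i = F (sum_j c_j g_j).  By cancellation in K the
   balanced vectors are closed under differences, so by Dickson's lemma they
   are generated by finitely many of them.  For each generator (e, c), the
   monomial f^e lies in A_(F u) with u = sum_j c_j g_j and thus has a preimage
   in B_u.  These preimages generate B: for b in B_u, phi b is a combination of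
   monomials f^e of degree F u; writing u = sum_j c_j g_j, each (e, c) is
   balanced, hence a sum of generators, so f^e is the image of a product of
   preimages lying in B_u; injectivity of phi on B_u then expresses b. *)

From Stdlib Require Import Classical.
From Stdlib Require List.
From mathcomp Require Import all_boot all_algebra.
Set Implicit Arguments. Unset Strict Implicit. Unset Printing Implicit Defensive.
Import GRing.Theory.

Definition leqv (n : nat) (x y : nat -> nat) := forall i, i < n -> x i <= y i.

Lemma leqvS n x y : leqv n x y -> x n <= y n -> leqv n.+1 x y.
Proof. by move=> lexy lexyn i; rewrite ltnS leq_eqVlt => /predU1P [->|/lexy]. Qed.

Definition finite_basis (n : nat) (P : (nat -> nat) -> Prop) (M : seq (nat -> nat)) :=
  (forall m, List.In m M -> P m) /\ (forall x, P x -> exists2 m, List.In m M & leqv n m x).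

Lemma leq_bigmax_In T (F : T -> nat) (s : seq T) x :
  List.In x s -> F x <= \max_(y <- s) F y.
Proof.
elim: s => //= y s IH [->|/IH lex]; rewrite big_cons; first exact: leq_maxl.
exact: leq_trans lex (leq_maxr _ _).
Qed.

Lemma finite_basis_cat n P Q1 Q2 M1 M2 :
  finite_basis n Q1 M1 -> finite_basis n Q2 M2 ->
  (forall x, P x <-> Q1 x \/ Q2 x) -> finite_basis n P (M1 ++ M2).
Proof.
move=> [M1Q M1x] [M2Q M2x] PQ; split.
  by move=> m /List.in_app_iff [/M1Q|/M2Q] Qm; apply/PQ; [left|right].
move=> x /PQ [/M1x [m mM lemx]|/M2x [m mM lemx]]; exists m => //.
  by apply/List.in_app_iff; left.
by apply/List.in_app_iff; right.
Qed.

Section DicksonStep.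
Variable n : nat.
Hypothesis dickson_n : forall P, exists M, finite_basis n P M.

Lemma finite_basis_below P H : exists M, finite_basis n.+1 (fun x => P x /\ x n < H) M.
Proof.
elim: H => [|H [Ms hMs]]; first by exists [::]; split => // x [].
have [MH [MHP MHx]] := dickson_n (fun x => P x /\ x n = H).
have hMH : finite_basis n.+1 (fun x => P x /\ x n = H) MH.
  split => // x Px; have [m mMH lemx] := MHx x Px; exists m => //.
  by apply: leqvS; rewrite // (MHP m mMH).2 Px.2.
exists (MH ++ Ms); apply: finite_basis_cat hMH hMs _ => x.
rewrite ltnS leq_eqVlt; split=> [[Px /predU1P []]|[] [Px]]; [left|right|..] => //.
  by move=> ->; rewrite eqxx.
by move=> ->; rewrite orbT.
Qed.

End DicksonStep.

Lemma dickson n P : exists M, finite_basis n P M.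
Proof.
elim: n P => [|n IH] P.
  case: (classic (exists x, P x)) => [[x Px]|noP].
    by exists [:: x]; split=> [m [<-|]|y _] //; exists x; [left|].
  by exists [::]; split=> // x Px; case: noP; exists x.
have [MT [MTP MTx]] := IH P.
have [Ms [MsP Msx]] := finite_basis_below IH P (\max_(m <- MT) m n).+1.
exists (MT ++ Ms); split.
  by move=> m /List.in_app_iff [/MTP|/MsP []].
move=> x Px; have [m mMT lemx] := MTx x Px.
case: (leqP (m n) (x n)) => [lemxn|ltxmn].
  by exists m; [apply/List.in_app_iff; left|exact: leqvS].
have [|m' m'Ms lem'x] := Msx x; last by exists m'; [apply/List.in_app_iff; right|].
by split=> //; rewrite ltnS (leq_trans (ltnW ltxmn)) // leq_bigmax_In.
Qed.

Lemma sub_closed_finite_generation n P :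
  (forall x y, P x -> P y -> leqv n y x -> P (fun i => x i - y i)) ->
  exists G, (forall h, List.In h G -> P h) /\
    forall x, P x -> exists2 l, (forall h, List.In h l -> List.In h G) &
      forall i, i < n -> x i = \sum_(h <- l) h i.
Proof.
move=> Psub.
(* The minimal nonzero elements of P generate it: subtracting one of them
   from a nonzero x stays in P and lowers the total size of x. *)
have [M [MP Mx]] := dickson n (fun x => P x /\ exists2 i, i < n & 0 < x i).
exists M; split=> [h /MP [] //|x Px].
have [N] := ubnP (\sum_(i < n) x i); elim: N x Px => // N IHN x Px ltxN.
case: (classic (exists2 i, i < n & 0 < x i)) => [nz|zero]; last first.
  exists [::] => // i ltin; rewrite big_nil; apply/eqP; rewrite -leqn0 leqNgt.
  by apply/negP => xi; apply: zero; exists i.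
have [m mM lemx] := Mx x (conj Px nz); have [Pm [j ltjn mj]] := MP m mM.
have sum_sub : \sum_(i < n) (x i - m i) + \sum_(i < n) m i = \sum_(i < n) x i.
  by rewrite -big_split /=; apply: eq_bigr => i _; rewrite subnK ?lemx.
have [|l lM lx] := IHN _ (Psub x m Px Pm lemx).
  rewrite (leq_trans _ (ltnSE ltxN)) // -sum_sub -[X in X < _]addn0 ltn_add2l.
  by rewrite (bigD1 (Ordinal ltjn)) //= ltn_addr.
exists (m :: l) => [h [<-|/lM] //|i ltin].
by rewrite big_cons -lx // subnKC ?lemx.
Qed.

Local Open Scope ring_scope.

Lemma sumr_pred1_seq (V : nmodType) (I : eqType) (D : seq I) (i0 : I) (c : V) :
  uniq D -> i0 \in D -> \sum_(i <- D | i0 == i) c = c.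
Proof.
move=> uD i0D; rewrite big_const_seq.
have -> : count (fun i => i0 == i) D = 1%N.
  by rewrite (eq_count (a2 := pred1 i0)) ?count_uniq_mem ?i0D // => i; rewrite eq_sym.
by rewrite /= addr0.
Qed.

Lemma sumr_fibers (V : nmodType) (K : eqType) (I : Type) (D : seq K) (s : seq I)
    (d : I -> K) (y : I -> V) : uniq D -> {subset map d s <= D} ->
  \sum_(k <- D) \sum_(i <- s | d i == k) y i = \sum_(i <- s) y i.
Proof.
move=> uD; elim: s => [_|i s IH sD]; first by rewrite big_nil big1 // => k _; rewrite big_nil.
rewrite big_cons -IH => [|k ks]; last by apply: sD; rewrite /= in_cons ks orbT.
rewrite -[y i](sumr_pred1_seq _ uD (sD _ (mem_head _ _))) [X in X + _]big_mkcond /=.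
by rewrite -big_split /=; apply: eq_bigr => k _; rewrite big_cons; case: ifP; rewrite ?add0r.
Qed.

Section Grading.
Variables (R : comNzRingType) (K : nmodType) (A : comAlgType R) (Ag : K -> A -> Prop).
Hypothesis gradA : is_grading Ag.

Lemma grade0 w : Ag w 0.
Proof. by case: gradA => /(_ w) []. Qed.

Lemma gradeD w x y : Ag w x -> Ag w y -> Ag w (x + y).
Proof. by case: gradA => /(_ w) [_ + _] _ _ _; apply. Qed.

Lemma gradeZ w (c : R) x : Ag w x -> Ag w (c *: x).
Proof. by case: gradA => /(_ w) [_ _ +] _ _ _; apply. Qed.

Lemma gradeN w x : Ag w x -> Ag w (- x).
Proof. by rewrite -scaleN1r; apply: gradeZ. Qed.

Lemma gradeM w w' x y : Ag w x -> Ag w' y -> Ag (w + w') (x * y).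
Proof. by case: gradA => _ _ _; apply. Qed.

Lemma grade_sum (I : Type) (s : seq I) (P : pred I) (y : I -> A) w :
  (forall i, P i -> Ag w (y i)) -> Ag w (\sum_(i <- s | P i) y i).
Proof. by move=> hy; elim/big_ind: _ => //; [apply: grade0|apply: gradeD]. Qed.

Lemma grade_fiber_sum_eq0 (I : Type) (s : seq I) (d : I -> K) (y : I -> A) :
  (forall i, Ag (d i) (y i)) -> \sum_(i <- s) y i = 0 ->
  forall k, \sum_(i <- s | d i == k) y i = 0.
Proof.
move=> hy sum0 k; have [_ _ direct _] := gradA.
pose D := undup (k :: map d s).
apply: (direct D (fun k => \sum_(i <- s | d i == k) y i)); rewrite ?undup_uniq //.
- by move=> k'; apply: grade_sum => i /eqP <-.
- by rewrite sumr_fibers ?undup_uniq // => k' k's; rewrite mem_undup in_cons k's orbT.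
- by rewrite mem_undup mem_head.
Qed.

Lemma grade_fiber_sum (I : Type) (s : seq I) (d : I -> K) (y : I -> A) k a :
  (forall i, Ag (d i) (y i)) -> Ag k a -> a = \sum_(i <- s) y i ->
  forall k', \sum_(i <- s | d i == k') y i = if k == k' then a else 0.
Proof.
move=> hy ha sum_a k'.
pose d' o := if o is Some i then d i else k.
pose y' o := if o is Some i then y i else - a.
have hy' o : Ag (d' o) (y' o) by case: o => [i|] /=; [apply: hy|apply: gradeN].
have sum0 : \sum_(o <- None :: map Some s) y' o = 0.
  by rewrite big_cons big_map /= -sum_a addNr.
have := grade_fiber_sum_eq0 hy' sum0 k'; rewrite big_cons big_map /= => fiber0.
case: eqP fiber0 => _ fiber0; last by rewrite ?add0r in fiber0.
by apply/eqP; rewrite -subr_eq0 addrC fiber0.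
Qed.

Hypothesis cancK : cancellative K.

Lemma grade1 : Ag 0 1.
Proof.
have [_ decomp _ _] := gradA.
have [s [e [us [he one_e]]]] := decomp 1.
(* For x in A_v, the component of x = x * 1 of degree v + w is x * e w; as
   v + w != v when w != 0, it vanishes. *)
have mul_e0 v x w : Ag v x -> w \in s -> w != 0 -> x * e w = 0.
  move=> hx ws w0; have x_sum : x = \sum_(w' <- s) x * e w' by rewrite -mulr_sumr -one_e mulr1.
  have := grade_fiber_sum (fun w' => gradeM hx (he w')) hx x_sum (v + w).
  have -> : (v == v + w) = false.
    by apply/eqP=> vw; move/eqP: w0; apply; apply: (@cancK _ _ v); rewrite add0r addrC -vw.
  rewrite (eq_bigl (fun w' => w == w')) => [|w' /=]; last first.
    by apply/eqP/eqP => [vw|<-] //; apply: (@cancK _ _ v); rewrite addrC -vw addrC.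
  by rewrite (eq_bigr (fun _ => x * e w)) => [|_ /eqP ->] //; rewrite sumr_pred1_seq.
rewrite one_e (bigID (fun w => w == 0)) /= [X in _ + X]big1_seq ?addr0.
  by apply: grade_sum => w /eqP <-.
move=> w /andP [w0 ws]; rewrite -[e w]mul1r one_e mulr_suml big1_seq // => w' _.
exact: mul_e0 _ _ _ (he w') ws w0.
Qed.

Lemma gradeX w x n : Ag w x -> Ag (w *+ n) (x ^+ n).
Proof.
move=> hx; elim: n => [|n IH]; first by rewrite mulr0n expr0; exact: grade1.
by rewrite mulrS exprS; apply: gradeM.
Qed.

Lemma grade_prod (I : Type) (s : seq I) (d : I -> K) (y : I -> A) :
  (forall i, Ag (d i) (y i)) -> Ag (\sum_(i <- s) d i) (\prod_(i <- s) y i).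
Proof. by move=> hy; apply: (big_ind2 Ag) => // *; [exact: grade1|exact: gradeM]. Qed.

End Grading.

Section SubalgebraGenerated.
Variables (R : comNzRingType) (A : comAlgType R) (s : seq A).

Lemma subalg_gen1 : in_subalg_gen s 1.
Proof. by move=> P P1. Qed.

Lemma subalg_genD x y : in_subalg_gen s x -> in_subalg_gen s y -> in_subalg_gen s (x + y).
Proof. by move=> hx hy P P1 PD PM PZ Ps; exact: PD (hx P P1 PD PM PZ Ps) (hy P P1 PD PM PZ Ps). Qed.

Lemma subalg_genM x y : in_subalg_gen s x -> in_subalg_gen s y -> in_subalg_gen s (x * y).
Proof. by move=> hx hy P P1 PD PM PZ Ps; exact: PM (hx P P1 PD PM PZ Ps) (hy P P1 PD PM PZ Ps). Qed.

Lemma subalg_genZ (c : R) x : in_subalg_gen s x -> in_subalg_gen s (c *: x).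
Proof. by move=> hx P P1 PD PM PZ Ps; exact: PZ (hx P P1 PD PM PZ Ps). Qed.

Lemma subalg_gen_mem x : x \in s -> in_subalg_gen s x.
Proof. by move=> xs P P1 PD PM PZ Ps; apply: Ps. Qed.

Lemma subalg_gen0 : in_subalg_gen s 0.
Proof. by have := subalg_genZ 0 subalg_gen1; rewrite scale0r. Qed.

Lemma subalg_gen_sum (I : Type) (r : seq I) (P : pred I) (y : I -> A) :
  (forall i, P i -> in_subalg_gen s (y i)) -> in_subalg_gen s (\sum_(i <- r | P i) y i).
Proof. by move=> hy; elim/big_ind: _ => //; [apply: subalg_gen0|apply: subalg_genD]. Qed.

End SubalgebraGenerated.

Section Monomials.
Variables (R : comNzRingType) (A : comAlgType R) (f : nat -> A) (r : nat).

Definition monomial (e : nat -> nat) : A := \prod_(i < r) f i ^+ e i.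

Definition monomial_span (a : A) : Prop :=
  exists E : seq (R * (nat -> nat)), a = \sum_(p <- E) p.1 *: monomial p.2.

Lemma monomialD e e' : monomial (fun i => e i + e' i)%N = monomial e * monomial e'.
Proof. by rewrite /monomial -big_split; apply: eq_bigr => i _; rewrite exprD. Qed.

Lemma monomial_sum (l : seq (nat -> nat)) x :
  (forall i, (i < r)%N -> x i = \sum_(h <- l) h i)%N ->
  monomial x = \prod_(h <- l) monomial h.
Proof.
move=> hx; rewrite /monomial exchange_big /=; apply: eq_bigr => i _.
by rewrite prodrXr -hx.
Qed.

Lemma monomial_span0 : monomial_span 0.
Proof. by exists [::]; rewrite big_nil. Qed.

Lemma monomial_span1 : monomial_span 1.
Proof.
exists [:: (1, fun _ => 0%N)]; rewrite big_seq1 scale1r /monomial.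
by rewrite big1 // => i _; rewrite expr0.
Qed.

Lemma monomial_span_gen i : (i < r)%N -> monomial_span (f i).
Proof.
move=> ltir; exists [:: (1, fun j => nat_of_bool (j == i))]; rewrite big_seq1 scale1r.
rewrite /monomial (bigD1 (Ordinal ltir)) //= eqxx expr1 big1 ?mulr1 // => j /= ji.
by rewrite (negbTE (ji : (j : nat) != i)) expr0.
Qed.

Lemma monomial_spanD x y : monomial_span x -> monomial_span y -> monomial_span (x + y).
Proof. by move=> [E1 ->] [E2 ->]; exists (E1 ++ E2); rewrite big_cat. Qed.

Lemma monomial_spanZ (c : R) x : monomial_span x -> monomial_span (c *: x).
Proof.
move=> [E ->]; exists [seq (c * p.1, p.2) | p <- E].
by rewrite big_map scaler_sumr; apply: eq_bigr => p _ /=; rewrite scalerA.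
Qed.

Lemma monomial_spanM x y : monomial_span x -> monomial_span y -> monomial_span (x * y).
Proof.
move=> [E1 ->] [E2 ->].
exists [seq (p.1 * q.1, fun i => (p.2 i + q.2 i)%N) | p <- E1, q <- E2].
rewrite big_allpairs_dep /= mulr_suml; apply: eq_bigr => p _.
rewrite mulr_sumr; apply: eq_bigr => q _ /=.
by rewrite monomialD -scalerA -scalerAl -scalerAr.
Qed.

Lemma subalg_gen_monomial_span s a :
  (forall x, x \in s -> monomial_span x) -> in_subalg_gen s a -> monomial_span a.
Proof.
move=> hs; apply; [exact: monomial_span1|exact: monomial_spanD|
                   exact: monomial_spanM|exact: monomial_spanZ|exact: hs].
Qed.

End Monomials.

Definition monomial_deg (K : nmodType) (w : nat -> K) (r : nat) (e : nat -> nat) : K :=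
  \sum_(i < r) w i *+ e i.

Section HomogeneousGenerators.
Variables (R : comNzRingType) (K : nmodType) (A : comAlgType R) (Ag : K -> A -> Prop).
Hypothesis gradA : is_grading Ag.
Variables (r : nat) (f : nat -> A) (w : nat -> K).
Hypothesis f_homog : forall i, (i < r)%N -> Ag (w i) (f i).

Lemma grade_monomial : cancellative K -> forall e, Ag (monomial_deg w r e) (monomial f r e).
Proof.
move=> cancK e; apply: (@grade_prod _ _ _ _ gradA cancK _ _ (fun i : 'I_r => w i *+ e i)).
by move=> i; exact: (gradeX gradA cancK (e i) (f_homog (ltn_ord i))).
Qed.

Lemma homogeneous_monomial_span : cancellative K ->
  forall k a (E : seq (R * (nat -> nat))), Ag k a ->
  a = \sum_(p <- E) p.1 *: monomial f r p.2 ->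
  a = \sum_(p <- E | monomial_deg w r p.2 == k) p.1 *: monomial f r p.2.
Proof.
move=> cancK k a E ha sum_a.
rewrite (grade_fiber_sum gradA (d := fun p => monomial_deg w r p.2) _ ha sum_a) ?eqxx //.
by move=> p; apply/(gradeZ gradA)/grade_monomial.
Qed.

End HomogeneousGenerators.

Lemma homogeneous_components (R : comNzRingType) (K : nmodType) (A : comAlgType R)
    (Ag : K -> A -> Prop) (s : seq A) : is_grading Ag ->
  exists gens : seq (K * A), (forall p, p \in gens -> Ag p.1 p.2) /\
    forall x, x \in s -> exists2 l : seq (K * A), {subset l <= gens} & x = \sum_(p <- l) p.2.
Proof.
case=> _ decomp _ _; elim: s => [|x s [gens [gens_homog gens_s]]]; first by exists [::].
have [ws [xw [_ [hxw ->]]]] := decomp x.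
exists ([seq (w, xw w) | w <- ws] ++ gens); split.
  by move=> p; rewrite mem_cat => /orP [/mapP [w _ ->] //|/gens_homog].
move=> y; rewrite in_cons => /predU1P [->|ys].
  by exists [seq (w, xw w) | w <- ws]; rewrite ?big_map // => p pw; rewrite mem_cat pw.
have [l lgens ->] := gens_s y ys.
by exists l => // p /lgens pgens; rewrite mem_cat pgens orbT.
Qed.

Lemma homogeneous_generators (R : comNzRingType) (K : nmodType) (A : comAlgType R)
    (Ag : K -> A -> Prop) : is_grading Ag -> fg_algebra A ->
  exists r (f : nat -> A) (w : nat -> K),
    (forall i, (i < r)%N -> Ag (w i) (f i)) /\ forall a, monomial_span f r a.
Proof.
move=> gradA [s gen_s]; have [gens [gens_homog gens_s]] := homogeneous_components s gradA.
pose f i := (nth (0, 0) gens i).2; pose w i := (nth (0, 0) gens i).1.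
exists (size gens), f, w; split=> [i ltig|a]; first exact/gens_homog/mem_nth.
apply: subalg_gen_monomial_span (gen_s a) => x /gens_s [l lgens ->].
elim: l lgens => [|p l IH] lgens; first by rewrite big_nil; exact: monomial_span0.
rewrite big_cons; apply: monomial_spanD; last by apply: IH => q ql; apply/lgens/mem_behead.
have pgens : p \in gens by apply/lgens/mem_head.
by rewrite -(nth_index (0, 0) pgens); apply: monomial_span_gen; rewrite index_mem.
Qed.

Section GradedLift.
Variables (R : comNzRingType) (L K : nmodType) (B A : comAlgType R).
Variables (Bg : L -> B -> Prop) (Ag : K -> A -> Prop).
Variables (phi : {lrmorphism B -> A}) (F : {additive L -> K}).
Hypotheses (cancL : cancellative L) (cancK : cancellative K).
Hypotheses (gradB : is_grading Bg) (gradA : is_grading Ag).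
Hypothesis phi_graded : graded_morphism Bg Ag phi F.
Hypothesis phi_inj : forall u b b', Bg u b -> Bg u b' -> phi b = phi b' -> b = b'.
Hypothesis phi_surj : forall u a, Ag (F u) a -> exists2 b, Bg u b & phi b = a.
Variables (r : nat) (f : nat -> A) (w : nat -> K).
Hypothesis f_homog : forall i, (i < r)%N -> Ag (w i) (f i).
Hypothesis f_span : forall a, monomial_span f r a.
Variable g : seq L.
Hypothesis weight_monoid_gen : forall u, weight_monoid Bg u -> in_submonoid_gen g u.

(* An exponent vector x records a monomial in f on its first r coordinates and
   a weight in the monoid generated by g on the next size g coordinates. *)
Definition weight (x : nat -> nat) : L := \sum_(j < size g) g`_j *+ x (r + j)%N.

Definition balanced (x : nat -> nat) : Prop := monomial_deg w r x = F (weight x).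

Lemma balanced_sub x y : balanced x -> balanced y -> leqv (r + size g) y x ->
  balanced (fun i => x i - y i)%N.
Proof.
move=> bx byy leyx.
have subK (u : nat -> K) n : (forall i, i < n -> y i <= x i)%N ->
    \sum_(i < n) u i *+ x i = \sum_(i < n) u i *+ (x i - y i) + \sum_(i < n) u i *+ y i.
  by move=> le; rewrite -big_split; apply: eq_bigr => i _ /=; rewrite -mulrnDr subnK ?le.
apply: (@cancK _ _ (monomial_deg w r y)); rewrite /balanced -subK => [|i ltir]; last first.
  by rewrite leyx ?ltn_addr.
rewrite -/(monomial_deg w r x) bx byy -raddfD; congr (F _); rewrite /weight -big_split /=.
by apply: eq_bigr => j _; rewrite -mulrnDr subnK // leyx // ltn_add2l.
Qed.

Lemma weight_sum x (l : seq (nat -> nat)) :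
  (forall i, i < r + size g -> x i = \sum_(h <- l) h i)%N ->
  weight x = \sum_(h <- l) weight h.
Proof.
move=> hx; rewrite /weight exchange_big /=; apply: eq_bigr => j _.
by rewrite sumrMnr -hx // ltn_add2l.
Qed.

Lemma grade_balanced x : balanced x -> Ag (F (weight x)) (monomial f r x).
Proof. by move=> <-; apply: grade_monomial. Qed.

Lemma balanced_lift : exists cs : seq B, forall x, balanced x ->
  exists b, [/\ Bg (weight x) b, phi b = monomial f r x & in_subalg_gen cs b].
Proof.
have [G [G_bal G_gen]] := sub_closed_finite_generation balanced_sub.
have [cs cs_lift] : exists cs : seq B, forall h, List.In h G ->
    exists2 c, c \in cs & Bg (weight h) c /\ phi c = monomial f r h.
  elim: G {G_gen} G_bal => [|h G IH] G_bal; first by exists [::].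
  have [cs cs_lift] := IH (fun h' hh' => G_bal h' (or_intror hh')).
  have [c hc phic] := phi_surj (grade_balanced (G_bal h (or_introl erefl))).
  exists (c :: cs) => h' [<-|hh']; first by exists c; rewrite ?mem_head.
  by have [c' c'cs hc'] := cs_lift h' hh'; exists c'; rewrite // in_cons c'cs orbT.
have lift_prod l : (forall h, List.In h l -> List.In h G) -> exists b,
    [/\ Bg (\sum_(h <- l) weight h) b, phi b = \prod_(h <- l) monomial f r h
      & in_subalg_gen cs b].
  elim: l => [|h l IH] lG.
    by exists 1; rewrite !big_nil rmorph1; split; [apply: grade1|..|apply: subalg_gen1].
  have [b [hb phib csb]] := IH (fun h' hh' => lG h' (or_intror hh')).
  have [c ccs [hc phic]] := cs_lift h (lG h (or_introl erefl)).
  exists (c * b); rewrite !big_cons -phic -phib; split; [exact: gradeM|exact: rmorphM|].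
  exact: subalg_genM (subalg_gen_mem ccs) csb.
exists cs => x /G_gen [l lG lx]; have [b [hb phib csb]] := lift_prod l lG.
exists b; rewrite (weight_sum lx) (@monomial_sum _ _ f r l) // => i ltir.
by rewrite lx ?ltn_addr.
Qed.

Section Generators.
Variable cs : seq B.
Hypothesis cs_lift : forall x, balanced x ->
  exists b, [/\ Bg (weight x) b, phi b = monomial f r x & in_subalg_gen cs b].

Definition exponent_cat (e : nat -> nat) (c : 'I_(size g) -> nat) (i : nat) : nat :=
  if (i < r)%N then e i else if insub (i - r)%N is Some j then c j else 0%N.

Lemma exponent_cat_lt e c i : (i < r)%N -> exponent_cat e c i = e i.
Proof. by rewrite /exponent_cat => ->. Qed.

Lemma exponent_cat_add e c (j : 'I_(size g)) : exponent_cat e c (r + j)%N = c j.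
Proof. by rewrite /exponent_cat ltnNge leq_addr addKn valK. Qed.

Lemma lift_monomial u e : weight_monoid Bg u -> monomial_deg w r e = F u ->
  exists b, [/\ Bg u b, phi b = monomial f r e & in_subalg_gen cs b].
Proof.
move=> /weight_monoid_gen [c ->] deg_e.
pose x := exponent_cat e c.
have weight_x : weight x = \sum_(j < size g) g`_j *+ c j.
  by apply: eq_bigr => j _; rewrite /x exponent_cat_add.
have monomial_x : monomial f r x = monomial f r e.
  by apply: eq_bigr => i _; rewrite /x exponent_cat_lt.
have [|b [hb phib csb]] := cs_lift (x := x).
  by rewrite /balanced weight_x -deg_e; apply: eq_bigr => i _; rewrite /x exponent_cat_lt.
by exists b; rewrite -weight_x -monomial_x.
Qed.

Lemma homogeneous_in_subalg u b : Bg u b -> in_subalg_gen cs b.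
Proof.
move=> hb; have [->|b0] := eqVneq b 0; first exact: subalg_gen0.
have Su : weight_monoid Bg u by exists b; split=> //; apply/eqP.
have [E phib] := f_span (phi b).
have {}phib := homogeneous_monomial_span gradA f_homog cancK (phi_graded hb) phib.
have [b' [hb' phib' csb']] : exists b', [/\ Bg u b',
    phi b' = \sum_(p <- E | monomial_deg w r p.2 == F u) p.1 *: monomial f r p.2
  & in_subalg_gen cs b'].
  elim: E {phib} => [|p E [b1 [hb1 phib1 csb1]]].
    by exists 0; rewrite big_nil raddf0; split; [apply: grade0|..|apply: subalg_gen0].
  rewrite big_cons; case: eqP => [deg_p|_]; last by exists b1.
  have [c [hc phic csc]] := lift_monomial Su deg_p.
  exists (p.1 *: c + b1); rewrite -phic -phib1; split.
  - by apply: gradeD => //; apply: gradeZ.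
  - by rewrite raddfD /= linearZ.
  - exact: subalg_genD (subalg_genZ _ csc) csb1.
by rewrite (phi_inj hb hb') // phib' -phib.
Qed.

End Generators.

Lemma fg_algebra_lift : fg_algebra B.
Proof.
have [cs cs_lift] := balanced_lift; exists cs => b.
have [_ decomp _ _] := gradB; have [us [bu [_ [hbu ->]]]] := decomp b.
by apply: subalg_gen_sum => u _; exact: (homogeneous_in_subalg cs_lift (hbu u)).
Qed.

End GradedLift.

Theorem proposition1p1p2p6
  (R : comNzRingType) (L K : nmodType)
  (B A : comAlgType R) (Bg : L -> B -> Prop) (Ag : K -> A -> Prop)
  (phi : {lrmorphism B -> A}) (F : {additive L -> K}) :
  noetherian R ->
  cancellative L -> cancellative K ->
  is_grading Bg -> is_grading Ag ->
  no_zero_divisors A ->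
  graded_morphism Bg Ag phi F ->
  fg_monoid (weight_monoid Bg) ->
  (forall u : L,
     (forall b b' : B, Bg u b -> Bg u b' -> phi b = phi b' -> b = b') /\
     (forall a : A, Ag (F u) a -> exists2 b : B, Bg u b & phi b = a)) ->
  fg_algebra A ->
  fg_algebra B.
Proof.
move=> _ cancL cancK gradB gradA _ phi_graded [g [_ S_gen]] phi_iso fgA.
have [r [f [w [f_homog f_span]]]] := homogeneous_generators gradA fgA.
apply: (fg_algebra_lift cancL cancK gradB gradA phi_graded _ _ f_homog f_span (g := g)).
- by move=> u; apply: (phi_iso u).1.
- by move=> u; apply: (phi_iso u).2.
- by move=> u /S_gen.
Qed.
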